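(* For $k\in\mathbb{N}\cup\{0\}$ let $W_k,Z_k$ be Banach spaces such that (i) $Z_k$ is compactly embedded in $W_k$, and (ii) for each $\varepsilon>0$, $\kappa_\varepsilon=\sup_{k\ge0}\mathcal{N}_\varepsilon(B_{Z_k},W_k)<\infty$. Let $\mathcal{B}_k\subset W_k$ be sets and $U^k:\mathcal{B}_k\to\mathcal{B}_{k-1}$ ($k\ge1$) maps such that (iii) each $\mathcal{B}_k$ is compact in $W_k$; (iv) $\sup_{k\ge0}\|\mathcal{B}_k\|_{W_k}=Q_1<\infty$; (v) $U^k(\mathcal{B}_k)=\mathcal{B}_{k-1}$; (vi) there is a decomposition $U^k(z)=P^k(z)+N^k(z)$ and constants $0<\varrho<\frac14$, $Q_2>0$ such that for all $z^1,z^2\in\mathcal{B}_k$, $$\|P^k(z^1)-P^k(z^2)\|_{W_{k-1}}\le\varrho\|z^1-z^2\|_{W_k},\qquad \|N^k(z^1)-N^k(z^2)\|_{Z_{k-1}}\le Q_2\|z^1-z^2\|_{W_k}.$$ Then $$\dim_{W_0}\mathcal{B}_0\le\frac{\log_2\kappa_{\varrho Q_2^{-1}}}{\log_2\frac{1}{4\varrho}}.$$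
   Context: For a Banach space $W$, $B_W$ denotes its closed unit ball and $B_W(\varepsilon,x)=x+\varepsilon B_W$. For $K\subset W$ (relatively) compact, $\mathcal{N}_\varepsilon(K,W)$ is the minimal number of $\varepsilon$-balls of $W$ covering $K$; here $B_{Z_k}$ is regarded as a subset of $W_k$. The fractal dimension of a compact $K\subset W$ is $\dim_WK=\limsup_{\varepsilon\to0^+}\frac{\log\mathcal{N}_\varepsilon(K,W)}{\log(1/\varepsilon)}$. $\|D\|_W=\sup_{z\in D}\|z\|_W$. In (vi), $P^k,N^k$ map $\mathcal{B}_k$ into $W_{k-1}$, and the differences $N^k(z^1)-N^k(z^2)$ lie in $Z_{k-1}$. *)

From HB Require Import structures.
From mathcomp Require Import all_boot all_order all_algebra.
From mathcomp Require Import all_classical all_reals all_analysis.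
Set Implicit Arguments. Unset Strict Implicit. Unset Printing Implicit Defensive.
Import Order.TTheory GRing.Theory Num.Theory.
Import numFieldNormedType.Exports.
Local Open Scope classical_set_scope.
Local Open Scope ring_scope.

Definition cball {R : realType} {W : normedModType R} (x : W) (eps : R) : set W :=
  [set y | `|y - x| <= eps].

Definition eps_cover {R : realType} {W : normedModType R} (K : set W) (eps : R)
  (s : seq W) : Prop :=
  K `<=` \bigcup_(c in [set` s]) cball c eps.

Definition covnum {R : realType} {W : normedModType R} (K : set W) (eps : R) : \bar R :=
  ereal_inf [set ((size s)%:R)%:E | s in [set s : seq W | eps_cover K eps s]].

Definition log2 {R : realType} (x : R) : R := ln x / ln 2.

Definition fdim {R : realType} {W : normedModType R} (K : set W) : \bar R :=
  limf_esup (fun eps : R => (log2 (fine (covnum K eps)) / log2 (1 / eps))%:E) 0^'+.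

Definition emb_ball {R : realType} {Z W : normedModType R} (f : Z -> W) : set W :=
  f @` [set z | `|z| <= 1].

From HB Require Import structures.
From mathcomp Require Import all_boot all_order all_algebra.
From mathcomp Require Import all_classical all_reals all_analysis.
From mathcomp Require Import ring lra.
Set Implicit Arguments. Unset Strict Implicit. Unset Printing Implicit Defensive.
Import Order.TTheory GRing.Theory Num.Theory.
Import numFieldNormedType.Exports.
Local Open Scope classical_set_scope.
Local Open Scope ring_scope.

(* On a ball of radius r in B_{k+1}, the increments of N are, up to
   the factor 2 Q2 r, elements of B_{Z_k}; a (rho/Q2)-net of B_{Z_k} with at most
   kappa points therefore splits the image of the ball under U = P + N into
   kappa balls of radius 4 rho r, P being rho-Lipschitz.  As U maps B_{k+1}
   onto B_k, iterating from one ball of radius Q1 gives N_{(4 rho)^n Q1}(B_0) <=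
   kappa^n for every n, and covers at geometric scales a^n with L^n balls bound
   the fractal dimension by log L / log (1/a). *)

Section CoveringNumbers.
Variables (R : realType) (W : normedModType R).
Implicit Types (A : set W) (s : seq W).

Lemma covnum_ge0 A eps : (0 <= covnum A eps)%E.
Proof. by apply: le_ereal_inf_tmp => _ [s _ <-]; rewrite lee_fin ler0n. Qed.

Lemma covnum_le_size A eps s : eps_cover A eps s ->
  (covnum A eps <= (size s)%:R%:E)%E.
Proof. by move=> h; apply: ereal_inf_lbound; exists s. Qed.

Lemma eps_cover_le A e1 e2 s : e1 <= e2 -> eps_cover A e1 s -> eps_cover A e2 s.
Proof. by move=> le12 cov x /cov [c sc xc]; exists c => //; apply: le_trans le12. Qed.

Lemma eps_cover_size_gt0 A eps s x : A x -> eps_cover A eps s -> (0 < size s)%N.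
Proof. by move=> Ax /(_ x Ax) [c]; case: s. Qed.

Lemma covnum_le_radius A e1 e2 : e1 <= e2 -> (covnum A e2 <= covnum A e1)%E.
Proof.
move=> le12; apply: le_ereal_inf_tmp => _ [s cov <-].
exact: covnum_le_size (eps_cover_le le12 cov).
Qed.

Lemma covnum_le_cover A eps (x : R) : (covnum A eps <= x%:E)%E ->
  exists s, eps_cover A eps s /\ (size s)%:R <= x.
Proof.
move=> covx.
have some_cover : exists n, `[< exists s, eps_cover A eps s /\ size s = n >].
  apply: contrapT => no_cover.
  suff : covnum A eps = +oo%E by move=> covE; move: covx; rewrite covE.
  apply/ereal_inf_pinfty => y [s cov _]; case: no_cover.
  by exists (size s); apply/asboolP; exists s.
case: (ex_minnP some_cover) => n /asboolP [s [cov <-]] minn.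
exists s; split => //; rewrite -lee_fin (le_trans _ covx) //.
apply: le_ereal_inf_tmp => _ [s' cov' <-]; rewrite lee_fin ler_nat.
by apply: minn; apply/asboolP; exists s'.
Qed.

End CoveringNumbers.

Section ImageCover.
Variables (R : realType) (V V' Zt : normedModType R) (j : {linear Zt -> V'}).
Variables (B : set V) (U P N : V -> V') (rho Q2 : R) (cs : seq V').
Hypotheses (rho_gt0 : 0 < rho) (Q2_gt0 : 0 < Q2).
Hypothesis cs_cover : eps_cover (emb_ball j) (rho / Q2) cs.
Hypothesis UPN : forall z, B z -> U z = P z + N z.
Hypothesis P_lip : forall z1 z2, B z1 -> B z2 -> `|P z1 - P z2| <= rho * `|z1 - z2|.
Hypothesis N_lip : forall z1 z2, B z1 -> B z2 ->
  exists y : Zt, j y = N z1 - N z2 /\ `|y| <= Q2 * `|z1 - z2|.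

Lemma image_close_in_net z z0 r : 0 < r -> B z -> B z0 -> `|z - z0| <= 2 * r ->
  exists2 c, c \in cs & `|U z - (U z0 + (2 * Q2 * r) *: c)| <= 4 * rho * r.
Proof.
move=> r_gt0 Bz Bz0 zz0.
have [y [jy y_le]] := N_lip Bz Bz0.
have t_gt0 : 0 < 2 * Q2 * r by rewrite !mulr_gt0.
have y_ball : emb_ball j (j ((2 * Q2 * r)^-1 *: y)).
  exists ((2 * Q2 * r)^-1 *: y) => //=.
  rewrite normrZ normfV (gtr0_norm t_gt0) ler_pdivrMl // mulr1 (le_trans y_le) //.
  have -> : 2 * Q2 * r = Q2 * (2 * r) by ring.
  by rewrite ler_pM2l.
have [c cs_c y_c] := cs_cover y_ball; exists c => //.
have -> : U z - (U z0 + (2 * Q2 * r) *: c) =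
    (P z - P z0) + (2 * Q2 * r) *: (j ((2 * Q2 * r)^-1 *: y) - c).
  rewrite linearZ /= scalerBr scalerA mulfV ?gt_eqF // scale1r jy !UPN //.
  by rewrite !opprD !addrA; congr (_ - _ - _); rewrite addrAC.
rewrite (le_trans (ler_normD _ _)) // normrZ (gtr0_norm t_gt0).
have -> : 4 * rho * r = rho * (2 * r) + 2 * Q2 * r * (rho / Q2).
  by field; rewrite gt_eqF.
apply: lerD; first by rewrite (le_trans (P_lip Bz Bz0)) // ler_pM2l.
by rewrite ler_pM2l.
Qed.

Lemma image_cball_cover c r : 0 < r ->
  exists s, eps_cover (U @` (B `&` cball c r)) (4 * rho * r) s /\
            (size s <= size cs)%N.
Proof.
move=> r_gt0.
have [[z0 [Bz0 z0c]]|empty] := pselect (exists z0, (B `&` cball c r) z0); last first.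
  by exists [::]; split => // y [z Bcz _]; case: empty; exists z.
exists [seq U z0 + (2 * Q2 * r) *: c' | c' <- cs]; split; last by rewrite size_map.
move=> y [z [Bz zc] <-].
have zz0 : `|z - z0| <= 2 * r.
  have -> : z - z0 = (z - c) - (z0 - c) by rewrite opprB addrA subrK.
  have -> : 2 * r = r + r by ring.
  by rewrite (le_trans (ler_normB _ _)) // lerD.
have [c' cs_c' Uz_c'] := image_close_in_net r_gt0 Bz Bz0 zz0.
by exists (U z0 + (2 * Q2 * r) *: c'); first exact: map_f.
Qed.

Lemma eps_cover_image A r s : 0 < r -> A `<=` B -> eps_cover A r s ->
  exists s', eps_cover (U @` A) (4 * rho * r) s' /\
             (size s' <= size s * size cs)%N.
Proof.
move=> r_gt0 AB covA.
suff [s' [cov' size']] : exists s',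
    eps_cover (U @` (B `&` \bigcup_(c in [set` s]) cball c r)) (4 * rho * r) s' /\
    (size s' <= size s * size cs)%N.
  exists s'; split => //; apply: subset_trans cov'; apply: image_subset.
  by move=> z Az; split; [exact: AB | exact: covA].
elim: s {covA} => [|c s [s2 [cov2 size2]]].
  by exists [::]; split => // y [z [_ []]].
have [s1 [cov1 size1]] := image_cball_cover c r_gt0.
exists (s1 ++ s2); split; last by rewrite size_cat mulSn leq_add.
move=> y [z [Bz [c' /= /[!inE] /orP[/eqP-> zc|s_c' zc]]] <-].
  have [c1 s1_c1 zc1] : (\bigcup_(c in [set` s1]) cball c (4 * rho * r)) (U z).
    by apply: cov1; exists z.
  by exists c1; rewrite //= mem_cat s1_c1.
have [c2 s2_c2 zc2] : (\bigcup_(c in [set` s2]) cball c (4 * rho * r)) (U z).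
  by apply: cov2; exists z => //; split => //; exists c'.
by exists c2; rewrite //= mem_cat s2_c2 orbT.
Qed.

End ImageCover.

Lemma limf_esup_le (R : realType) (T : choiceType) (X : filteredType T)
    (F : set_system X) (f : X -> \bar R) (c : R) :
  (forall d, 0 < d -> \forall x \near F, (f x <= (c + d)%:E)%E) ->
  (limf_esup f F <= c%:E)%E.
Proof.
move=> f_le; apply/lee_addgt0Pr => d d_gt0; rewrite limf_esupE.
apply: le_trans (ereal_inf_lbound _) _.
  by exists [set x | (f x <= (c + d)%:E)%E]; first exact: f_le.
by apply: ge_ereal_sup => _ [x fx <-]; rewrite -EFinD.
Qed.

Section GeometricDecay.
Variables (R : realType) (a : R).
Hypotheses (a_gt0 : 0 < a) (a_lt1 : a < 1).

Lemma exists_expr_lt e : 0 < e -> exists n, a ^+ n < e.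
Proof.
move=> e_gt0.
have : (GRing.exp a : R^nat) n @[n --> \oo] --> 0 by apply: cvg_expr; rewrite gtr0_norm.
move/cvgr0Pnorm_lt => /(_ e e_gt0) [N _ /(_ N (leqnn N)) /=].
by rewrite gtr0_norm ?exprn_gt0 // => aN; exists N.
Qed.

Lemma geometric_bracket (Q eps : R) (M : nat) : 0 < Q -> 0 < eps ->
  eps < a ^+ M * Q -> exists2 m, (M <= m)%N & a ^+ m.+1 * Q <= eps < a ^+ m * Q.
Proof.
move=> Q_gt0 eps_gt0 epsM.
have some_n : exists n, a ^+ n * Q <= eps.
  have [n an] := exists_expr_lt (divr_gt0 eps_gt0 Q_gt0).
  by exists n; rewrite -ler_pdivlMr // ltW.
case: (ex_minnP some_n) => n0 n0_le n0_min.
have M_lt_n0 : (M < n0)%N.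
  rewrite ltnNge; apply/negP => n0M.
  suff : a ^+ M * Q <= eps by rewrite leNgt epsM.
  by rewrite (le_trans _ n0_le) // ler_pM2r // ler_iXn2l.
case: n0 n0_le n0_min M_lt_n0 => // m m_le m_min M_le_m; exists m => //.
by rewrite m_le ltNge; apply/negP => /m_min; rewrite ltnn.
Qed.

End GeometricDecay.

Lemma ln_le_of_le_expr (R : realType) (x L : R) (n : nat) : 1 <= L ->
  x <= L ^+ n -> ln x <= n%:R * ln L.
Proof.
move=> L_ge1 xL; have L_gt0 : 0 < L by apply: lt_le_trans L_ge1.
have [x_le0|x_gt0] := leP x 0; first by rewrite ln0 // mulr_ge0 ?ln_ge0.
by rewrite mulr_natl -lnXn // ler_ln // posrE exprn_gt0.
Qed.

Lemma log2_ratio (R : realType) (x y : R) : log2 x / log2 y = ln x / ln y.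
Proof.
have ln2_neq0 : ln (2 : R) != 0 by rewrite gt_eqF // ln_gt0 // ltr1n.
by rewrite /log2 invf_div mulrA divfK.
Qed.

(* For [a ^ m.+1 Q <= eps < a ^ m Q] the ratio is at most
   [(m + 1) log L / (m log (1/a) - log Q)], which tends to [log L / log (1/a)]. *)
Lemma fdim_le_of_geometric_covers (R : realType) (W : normedModType R) (A : set W)
    (a Q L : R) :
  0 < a -> a < 1 -> 0 < Q -> 1 <= L ->
  (forall n, (covnum A (a ^+ n * Q) <= (L ^+ n)%:E)%E) ->
  (fdim A <= (log2 L / log2 (1 / a))%:E)%E.
Proof.
move=> a_gt0 a_lt1 Q_gt0 L_ge1 covA.
set D := ln (1 / a); set u := ln L / D; set q := ln Q.
have D_gt0 : 0 < D by apply: ln_gt0; rewrite ltr_pdivlMr // mul1r.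
have u_ge0 : 0 <= u by apply: divr_ge0; [exact: ln_ge0 | exact: ltW].
rewrite log2_ratio -/u; apply: limf_esup_le => d d_gt0.
set T := (u * D + (u + d) * q) / (d * D).
have [M TM] : exists M : nat, T < M%:R.
  by exists (Num.bound `|T|); rewrite (le_lt_trans (ler_norm T)) // archi_boundP.
near=> eps.
have eps_gt0 : 0 < eps by near: eps; exact: nbhs_right_gt.
have eps_lt1 : eps < 1 by near: eps; exact: nbhs_right_lt.
have epsM : eps < a ^+ M * Q.
  by near: eps; apply: nbhs_right_lt; rewrite mulr_gt0 ?exprn_gt0.
have [m Mm /andP[eps_ge eps_lt]] := geometric_bracket a_gt0 a_lt1 Q_gt0 eps_gt0 epsM.
have cov_le : (covnum A eps <= (L ^+ m.+1)%:E)%E.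
  exact: le_trans (covnum_le_radius _ eps_ge) (covA _).
have cov_fin : covnum A eps \is a fin_num.
  by rewrite ge0_fin_numE ?covnum_ge0 // (le_lt_trans cov_le) ?ltry.
set x := fine (covnum A eps).
have ln_x : ln x <= m.+1%:R * ln L.
  by apply: ln_le_of_le_expr => //; rewrite -lee_fin fineK.
have ln_eps : m%:R * D - q < ln (1 / eps).
  have ln_eps_lt : ln eps < m%:R * ln a + q.
    rewrite /q mulr_natl -lnXn // -lnM ?posrE ?exprn_gt0 //.
    by rewrite ltr_ln ?posrE ?mulr_gt0 ?exprn_gt0.
  rewrite /D !div1r !lnV ?posrE //; lra.
have m_large : u * D + (u + d) * q < m%:R * (d * D).
  by rewrite -ltr_pdivrMr ?mulr_gt0 // (lt_le_trans TM) // ler_nat.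
have y_gt0 : 0 < ln (1 / eps) by apply: ln_gt0; rewrite ltr_pdivlMr // mul1r.
rewrite lee_fin log2_ratio ler_pdivrMr //.
have lnL : ln L = u * D by rewrite /u divfK // gt_eqF.
rewrite lnL -natr1 in ln_x.
nra.
Unshelve. all: by end_near.
Qed.

Section IteratedImages.
(* Otherwise [k] would be implicit in [B], [U], [P], [N] and [B k x] misparsed. *)
Local Unset Implicit Arguments.
Context {R : realType} {W Z : nat -> normedModType R} {j : forall k, {linear Z k -> W k}}.
Context {B : forall k, set (W k)} {U P N : forall k, W k.+1 -> W k} {rho Q2 K Q : R}.
Hypotheses (rho_gt0 : 0 < rho) (Q2_gt0 : 0 < Q2) (Q_gt0 : 0 < Q).
Hypothesis B_le : forall k x, B k x -> `|x| <= Q.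
Hypothesis U_onto : forall k, U k @` B k.+1 = B k.
Hypothesis UPN : forall k z, B k.+1 z -> U k z = P k z + N k z.
Hypothesis P_lip : forall k z1 z2, B k.+1 z1 -> B k.+1 z2 ->
  `|P k z1 - P k z2| <= rho * `|z1 - z2|.
Hypothesis N_lip : forall k z1 z2, B k.+1 z1 -> B k.+1 z2 ->
  exists y : Z k, j k y = N k z1 - N k z2 /\ `|y| <= Q2 * `|z1 - z2|.
Hypothesis nets : forall k,
  exists cs, eps_cover (emb_ball (j k)) (rho / Q2) cs /\ (size cs)%:R <= K.

Lemma covers_iterated_images n k :
  exists s, eps_cover (B k) ((4 * rho) ^+ n * Q) s /\ (size s)%:R <= K ^+ n.
Proof.
elim: n k => [|n IHn] k.
  exists [:: 0]; split; last by rewrite expr0.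
  move=> x Bx; exists 0; first by rewrite /= inE.
  by rewrite /cball /= subr0 expr0 mul1r B_le.
have [s [cov size_s]] := IHn k.+1.
have [cs [cs_cover size_cs]] := nets k.
have r_gt0 : 0 < (4 * rho) ^+ n * Q by rewrite mulr_gt0 ?exprn_gt0 ?mulr_gt0.
have [s' [cov' size_s']] := eps_cover_image rho_gt0 Q2_gt0 cs_cover
  (UPN k) (P_lip k) (N_lip k) r_gt0 (@subset_refl _ _) cov.
exists s'; split; first by rewrite -(U_onto k) exprS -mulrA.
rewrite (@le_trans _ _ (size s * size cs)%:R) ?ler_nat // natrM exprSr.
by rewrite ler_pM ?ler0n.
Qed.

End IteratedImages.

Theorem lemma6p2 (R : realType)
  (W Z : nat -> completeNormedModType R)
  (j : forall k, {linear Z k -> W k})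
  (* (i) Z_k compactly embedded in W_k *)
  (hj_inj : forall k, injective (j k))
  (hj_cont : forall k, continuous (j k))
  (hj_cpt : forall k, compact (closure (emb_ball (j k))))
  (* (ii) kappa_eps finite *)
  (hkappa : forall eps : R, 0 < eps ->
     (ereal_sup (range (fun k => covnum (emb_ball (j k)) eps)) < +oo)%E)
  (B : forall k, set (W k))
  (U P N : forall k, W k.+1 -> W k)
  (* (iii) *)
  (hB_cpt : forall k, compact (B k))
  (* (iv) *)
  (Q1 : R) (hQ1 : forall k (x : W k), B k x -> `|x| <= Q1)
  (* (v) *)
  (hU : forall k, U k @` B k.+1 = B k)
  (* (vi) *)
  (rho Q2 : R) (hrho0 : 0 < rho) (hrho1 : rho < 1/4) (hQ2 : 0 < Q2)
  (hUPN : forall k z, B k.+1 z -> U k z = P k z + N k z)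
  (hP : forall k z1 z2, B k.+1 z1 -> B k.+1 z2 ->
     `|P k z1 - P k z2| <= rho * `|z1 - z2|)
  (hN : forall k z1 z2, B k.+1 z1 -> B k.+1 z2 ->
     exists y : Z k, j k y = N k z1 - N k z2 /\ `|y| <= Q2 * `|z1 - z2|) :
  (fdim (B 0%N) <=
    (log2 (fine (ereal_sup (range (fun k =>
        covnum (emb_ball (j k)) (rho / Q2)))))
     / log2 (1 / (4 * rho)))%R%:E)%E.
Proof.
set kappa := ereal_sup _.
have kappa_ge k : (covnum (emb_ball (j k)) (rho / Q2) <= kappa)%E.
  by apply: ereal_sup_ubound; exists k.
have kappa_fin : kappa \is a fin_num.
  rewrite ge0_fin_numE ?hkappa ?divr_gt0 //.
  exact: le_trans (covnum_ge0 _ _) (kappa_ge 0%N).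
have nets k : exists cs, eps_cover (emb_ball (j k)) (rho / Q2) cs /\
    (size cs)%:R <= fine kappa.
  by apply: covnum_le_cover; rewrite fineK.
have K_ge1 : 1 <= fine kappa.
  have [cs [cs_cover size_cs]] := nets 0%N.
  have ball0 : emb_ball (j 0%N) 0 by exists 0; rewrite ?raddf0 //= normr0.
  by rewrite (le_trans _ size_cs) // ler1n (eps_cover_size_gt0 ball0 cs_cover).
have Q_gt0 : 0 < Num.max Q1 1 by rewrite lt_max ltr01 orbT.
have B_le k x : B k x -> `|x| <= Num.max Q1 1.
  by move=> Bx; rewrite le_max hQ1.
apply: (fdim_le_of_geometric_covers (Q := Num.max Q1 1)) => //.
- by rewrite mulr_gt0.
- lra.
- move=> n.
  have [s [cov size_s]] :=
    covers_iterated_images hrho0 hQ2 Q_gt0 B_le hU hUPN hP hN nets n 0.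
  by rewrite (le_trans (covnum_le_size cov)) ?lee_fin.
Qed.
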